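(* Let $d\in\mathbb N$, let $F$ be a countable locally finite structure, $G=\mathrm{Aut}(F)$ (with the pointwise convergence topology), and let $A\in\mathrm{Age}(F)$ be such that $F$ is $A$-homogeneous. If $|M(G)|\le d$, then $F\hookrightarrow(B)^A_{k,d}$ for all $B\in\mathrm{Age}(F)$ and all $k\ge 2$.
   Context: For structures $A,B$, $B^A$ is the set of embeddings of $A$ into $B$. $\mathrm{Age}(F)$ is the class of finitely generated structures embeddable in $F$. $F$ is $A$-homogeneous if for all $a,a'\in F^A$ there is $g\in\mathrm{Aut}(F)$ with $g\circ a=a'$. $M(G)$ is the universal minimal $G$-flow (flows are continuous actions on compact Hausdorff spaces). $F\hookrightarrow(B)^A_{k,d}$ means: for every $\chi:F^A\to\{0,\dots,k-1\}$ there is $b\in F^B$ with $|\chi(\{b\circ a:a\in B^A\})|\le d$. *)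

From mathcomp Require Import all_boot.
From Stdlib Require Import List.

Set Implicit Arguments.
Unset Strict Implicit.
Unset Printing Implicit Defensive.

Record signature := Signature {
  fsym : Type; farity : fsym -> nat;
  rsym : Type; rarity : rsym -> nat }.

Record structure (L : signature) := Structure {
  carrier :> Type;
  fint : forall f : fsym L, ('I_(farity f) -> carrier) -> carrier;
  rint : forall r : rsym L, ('I_(rarity r) -> carrier) -> Prop }.
Arguments fint {L s} f t.
Arguments rint {L s} r t.

Definition is_embedding (L : signature) (A B : structure L) (h : A -> B) : Prop :=
  (forall x y, h x = h y -> x = y) /\
  (forall f t, h (fint f t) = fint f (h \o t)) /\
  (forall r t, rint r t <-> rint r (h \o t)).

Definition fclosed (L : signature) (A : structure L) (X : A -> Prop) : Prop :=
  forall f (t : 'I_(farity f) -> A), (forall i, X (t i)) -> X (fint f t).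

Definition generated (L : signature) (A : structure L) (S : A -> Prop) (x : A) : Prop :=
  forall X, fclosed X -> (forall y, S y -> X y) -> X x.

Definition finitely_generated (L : signature) (A : structure L) : Prop :=
  exists s : list A, forall x, generated (fun y => List.In y s) x.

Definition finite_pred (T : Type) (X : T -> Prop) : Prop :=
  exists s : list T, forall x, X x -> List.In x s.

Definition locally_finite (L : signature) (A : structure L) : Prop :=
  forall s : list A, finite_pred (generated (fun y => List.In y s)).

Definition countable (T : Type) : Prop :=
  exists f : T -> nat, forall x y, f x = f y -> x = y.

Definition in_age (L : signature) (F A : structure L) : Prop :=
  finitely_generated A /\ exists a : A -> F, is_embedding a.

Record aut (L : signature) (F : structure L) := Aut {
  aut_fun :> F -> F;
  aut_emb : is_embedding aut_fun;
  aut_surj : forall y, exists x, aut_fun x = y }.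

Definition homogeneous_for (L : signature) (F A : structure L) : Prop :=
  forall a a' : A -> F, is_embedding a -> is_embedding a' ->
    exists g : aut F, forall z, g (a z) = a' z.

Definition is_topology (X : Type) (opn : (X -> Prop) -> Prop) : Prop :=
  opn (fun _ => True) /\ opn (fun _ => False) /\
  (forall U V, opn U -> opn V -> opn (fun x => U x /\ V x)) /\
  (forall (I : Type) (U : I -> X -> Prop), (forall i, opn (U i)) ->
     opn (fun x => exists i, U i x)).

Definition compact (X : Type) (opn : (X -> Prop) -> Prop) : Prop :=
  forall (I : Type) (U : I -> X -> Prop), (forall i, opn (U i)) ->
    (forall x, exists i, U i x) ->
    exists l : list I, forall x, exists i, List.In i l /\ U i x.

Definition hausdorff (X : Type) (opn : (X -> Prop) -> Prop) : Prop :=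
  forall x y, x <> y -> exists U V, opn U /\ opn V /\ U x /\ V y /\
    (forall z, U z -> V z -> False).

(* ---------- G-flows, G = Aut(F) with the pointwise convergence topology ----
   Basic neighbourhoods of g in G: {g' | g' z = g z for all z in a finite s}.
   Continuity of the action G x X -> X is stated w.r.t. the product topology. *)

Record flow (L : signature) (F : structure L) := Flow {
  pt : Type;
  opn : (pt -> Prop) -> Prop;
  act : aut F -> pt -> pt;
  flow_topology : is_topology opn;
  flow_compact : compact opn;
  flow_hausdorff : hausdorff opn;
  act_id : forall g : aut F, (forall z, g z = z) -> forall p, act g p = p;
  act_comp : forall g h gh : aut F, (forall z, gh z = g (h z)) ->
               forall p, act gh p = act g (act h p);
  act_cont : forall U, opn U -> forall g p, U (act g p) ->
      exists (s : list F) (V : pt -> Prop), opn V /\ V p /\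
        forall (g' : aut F) p', (forall z, List.In z s -> g' z = g z) ->
          V p' -> U (act g' p') }.

Definition minimal_flow (L : signature) (F : structure L) (X : flow F) : Prop :=
  (exists p : pt X, True) /\
  forall C : pt X -> Prop, opn (fun p => ~ C p) ->
    (forall g p, C p -> C (act g p)) -> (exists p, C p) -> forall p, C p.

Definition factor_map (L : signature) (F : structure L) (Y X : flow F)
    (phi : pt Y -> pt X) : Prop :=
  (forall U, opn U -> opn (fun y => U (phi y))) /\
  (forall g y, phi (act g y) = act g (phi y)) /\
  (forall x, exists y, phi y = x).

Definition universal_minimal (L : signature) (F : structure L) (M : flow F) : Prop :=
  minimal_flow M /\
  forall X : flow F, minimal_flow X -> exists phi, @factor_map L F M X phi.

Definition card_le (T : Type) (d : nat) : Prop :=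
  exists s : list T, (length s <= d)%coq_nat /\ forall x, List.In x s.

Definition arrows (L : signature) (F A B : structure L) (k d : nat) : Prop :=
  forall chi : {a : A -> F | is_embedding a} -> 'I_k,
    exists (b : B -> F) (hb : is_embedding b) (cs : list 'I_k),
      size cs <= d /\
      forall (a : A -> B) (ha : is_embedding a) (hba : is_embedding (b \o a)),
        chi (exist _ (b \o a) hba) \in cs.

From Pilot Require Import Defs.
From Stdlib Require Import List Classical ClassicalEpsilon FunctionalExtensionality ProofIrrelevance.
From mathcomp Require Import all_boot.

Set Implicit Arguments.
Unset Strict Implicit.
Unset Printing Implicit Defensive.

(* Fix a colouring chi of F^A, the embeddings of A into F.  Since F is
   countable and A finitely generated, F^A is countable, so the colourings of
   F^A form a compact metrizable space on which G = Aut(F) acts continuously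
   by (g.chi)(a) = chi(g^-1 o a).  The orbit closure X of chi is a G-flow;
   enumerating a countable base we carve out of X a minimal subflow Y.  As
   M(G) is universal, Y is a factor of M(G), hence has at most d points.  For
   a point c0 of Y, A-homogeneity shows that c0 takes at most d colours
   (its values are y(a0) for y in Y).  Finally c0 lies in the orbit closure
   of chi, so some translate g.chi agrees with c0 on the finitely many
   embeddings of A into the finite substructure generated by a copy b0 of B;
   then b = g^-1 o b0 is the required copy of B. *)

Lemma InP (T : eqType) (x : T) (s : seq T) : reflect (List.In x s) (x \in s).
Proof.
elim: s => [|y s IH] /=; first by right.
rewrite inE; apply: (iffP orP) => [[/eqP ->|/IH]|[->|/IH]]; auto.
Qed.

Definition maxl (T : Type) (f : T -> nat) (l : list T) : nat :=
  foldr maxn 0 (List.map f l).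

Lemma maxl_ub (T : Type) (f : T -> nat) (l : list T) x :
  List.In x l -> f x <= maxl f l.
Proof.
elim: l => //= y l IH [->|/IH le_fx]; first exact: leq_maxl.
exact: leq_trans le_fx (leq_maxr _ _).
Qed.

Lemma finite_seqs_over (T : Type) (ls : list T) (n : nat) :
  finite_pred (fun s : seq T => size s = n /\ forall x, List.In x s -> List.In x ls).
Proof.
elim: n => [|n [S HS]]; first by exists [:: [::]] => -[|x s] [] //; left.
exists (List.flat_map (fun x => List.map (cons x) S) ls) => -[[] //|x s] [[size_s] over_ls].
apply/in_flat_map; exists x; split; first by apply: over_ls; left.
by apply: in_map; apply: HS; split => // y Hy; apply: over_ls; right.
Qed.

Lemma emb_comp (L : signature) (A B C : structure L) (f : A -> B) (h : B -> C) :
  is_embedding f -> is_embedding h -> is_embedding (h \o f).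
Proof.
move=> [f_inj [f_fun f_rel]] [h_inj [h_fun h_rel]]; split; [|split].
- by move=> x y /h_inj /f_inj.
- by move=> g t /=; rewrite f_fun h_fun.
- by move=> r t; rewrite f_rel h_rel.
Qed.

Lemma generated_fclosed (L : signature) (A : structure L) (S : A -> Prop) :
  Defs.fclosed (generated S).
Proof. by move=> f t gen_t X X_closed X_S; apply: (X_closed f t) => i; apply: gen_t. Qed.

Lemma emb_generated (L : signature) (B F : structure L) (b : B -> F) (s : list B) :
  is_embedding b -> forall x, generated (fun y => List.In y s) x ->
  generated (fun y => List.In y (List.map b s)) (b x).
Proof.
move=> [_ [b_fun _]] x gen_x.
apply: (gen_x (fun x => generated (fun y => List.In y (List.map b s)) (b x))).
- by move=> f t Ht; rewrite b_fun; apply: generated_fclosed.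
- by move=> y Hy X _ X_s; apply: X_s; apply: in_map.
Qed.

Lemma emb_eq_on_generators (L : signature) (A B : structure L) (s : list A) (a a' : A -> B) :
  (forall x, generated (fun y => List.In y s) x) ->
  is_embedding a -> is_embedding a' ->
  (forall z, List.In z s -> a z = a' z) -> forall x, a x = a' x.
Proof.
move=> gen_s [_ [a_fun _]] [_ [a'_fun _]] eq_s x.
apply: (gen_s x (fun x => a x = a' x)) => // f t eq_t.
by rewrite a_fun a'_fun; congr (fint f _); apply: functional_extensionality.
Qed.

Section Automorphisms.
Variables (L : signature) (F : structure L).

Definition aut_inv (g : aut F) (y : F) : F :=
  proj1_sig (constructive_indefinite_description _ (aut_surj g y)).

Lemma aut_invK (g : aut F) y : g (aut_inv g y) = y.
Proof. exact: proj2_sig (constructive_indefinite_description _ (aut_surj g y)). Qed.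

Lemma aut_inj (g : aut F) x y : g x = g y -> x = y.
Proof. by case: (aut_emb g) => g_inj _; apply: g_inj. Qed.

Lemma aut_Kinv (g : aut F) x : aut_inv g (g x) = x.
Proof. by apply: (@aut_inj g); rewrite aut_invK. Qed.

Lemma aut_inv_emb (g : aut F) : is_embedding (aut_inv g).
Proof.
have g_inv_t t : g \o (aut_inv g \o t) = t.
  by apply: functional_extensionality => i /=; rewrite aut_invK.
case: (aut_emb g) => _ [g_fun g_rel]; split; [|split].
- by move=> x y E; rewrite -(aut_invK g x) -(aut_invK g y) E.
- by move=> f t; apply: (@aut_inj g); rewrite aut_invK g_fun g_inv_t.
- by move=> r t; rewrite (g_rel r (aut_inv g \o t)) g_inv_t.
Qed.

Definition aut_id : aut F.
Proof. by refine (@Aut L F id _ _) => [|y]; [split; [|split] | exists y]. Defined.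

Definition aut_comp (g h : aut F) : aut F.
Proof.
refine (@Aut L F (g \o h) (emb_comp (aut_emb h) (aut_emb g)) _) => y.
by case: (aut_surj g y) => x <-; case: (aut_surj h x) => z <-; exists z.
Defined.

End Automorphisms.

(* The space of k-colourings of a countable set J with the product topology,
   presented through an injective coding [code : J -> nat]: two colourings
   are close when they agree on all points of small code. *)
Section CountableProduct.
Variables (J : Type) (code : J -> nat).
Hypothesis code_inj : forall i j, code i = code j -> i = j.
Variable k : nat.

Definition colouring := J -> 'I_k.

Definition agree (n : nat) (c c' : colouring) : Prop :=
  forall j, code j < n -> c j = c' j.

Lemma agree_refl n c : agree n c c. Proof. by []. Qed.

Lemma agree_sym n c c' : agree n c c' -> agree n c' c.
Proof. by move=> E j Hj; rewrite E. Qed.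

Lemma agree_trans n c1 c2 c3 : agree n c1 c2 -> agree n c2 c3 -> agree n c1 c3.
Proof. by move=> E1 E2 j Hj; rewrite E1 ?E2. Qed.

Lemma agree_mono m n c c' : m <= n -> agree n c c' -> agree m c c'.
Proof. by move=> le_mn E j Hj; apply: E; apply: leq_trans le_mn. Qed.

Lemma agree_on_list (l : list J) c c' :
  agree (maxl code l).+1 c c' -> forall j, List.In j l -> c j = c' j.
Proof. by move=> E j Hj; apply: E; rewrite ltnS maxl_ub. Qed.

Lemma small_codes_finite n : finite_pred (fun j => code j < n).
Proof.
elim: n => [|n [l Hl]]; first by exists nil.
case: (classic (exists j, code j = n)) => [[j0 code_j0]|no_code].
- exists (j0 :: l) => j; rewrite ltnS leq_eqVlt => /orP [/eqP E|/Hl]; last by right.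
  by left; apply: code_inj; rewrite E code_j0.
- exists l => j; rewrite ltnS leq_eqVlt => /orP [/eqP E|/Hl] //.
  by case: no_code; exists j.
Qed.

Definition below (n : nat) : list J :=
  proj1_sig (constructive_indefinite_description _ (small_codes_finite n)).

Lemma belowP n j : code j < n -> List.In j (below n).
Proof. exact: proj2_sig (constructive_indefinite_description _ (small_codes_finite n)) j. Qed.

(* A countable base: [basic j] is the cylinder prescribing the values at the
   points [below n], where [j] codes [n] together with these values. *)
Definition basic (j : nat) (c : colouring) : Prop :=
  if (unpickle j : option (nat * seq nat)) is Some (n, w)
  then List.map (fun i => nat_of_ord (c i)) (below n) = w else False.

Lemma basic_open j c : basic j c -> exists n, forall c', agree n c' c -> basic j c'.
Proof.
rewrite /basic; case: (unpickle j) => [[n w]|] // <-.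
exists (maxl code (below n)).+1 => c' E; apply: map_ext_in => i Hi.
by rewrite (agree_on_list E).
Qed.

Lemma basic_ball n c : exists j, basic j c /\ forall c', basic j c' -> agree n c' c.
Proof.
exists (pickle (n, List.map (fun i => nat_of_ord (c i)) (below n))).
rewrite /basic pickleK; split => // c' /map_ext_in_iff E i Hi.
by apply: ord_inj; apply: E; apply: belowP.
Qed.

Definition closed_set (S : colouring -> Prop) : Prop :=
  forall c, (forall n, exists z, S z /\ agree n z c) -> S c.

Definition sub_open (S : colouring -> Prop) (V : {c | S c} -> Prop) : Prop :=
  forall y, V y -> exists n, forall y', agree n (sval y') (sval y) -> V y'.
Arguments sub_open : clear implicits.

Lemma sval_inj (S : colouring -> Prop) (p q : {c | S c}) : sval p = sval q -> p = q.
Proof. by case: p q => p hp [q hq] /= E; subst; f_equal; apply: proof_irrelevance. Qed.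

Lemma ball_open (S : colouring -> Prop) n c : sub_open S (fun y => agree n (sval y) c).
Proof. by move=> y Ey; exists n => y' E'; apply: agree_trans E' Ey. Qed.

Lemma sub_topology (S : colouring -> Prop) : is_topology (sub_open S).
Proof.
split; [|split; [|split]].
- by move=> y _; exists 0.
- by [].
- move=> U V U_open V_open y [Uy Vy].
  have [n Hn] := U_open y Uy; have [m Hm] := V_open y Vy.
  exists (maxn n m) => y' E; split.
  + by apply: Hn; apply: agree_mono E; rewrite leq_maxl.
  + by apply: Hm; apply: agree_mono E; rewrite leq_maxr.
- move=> I U U_open y [i Uy]; have [n Hn] := U_open i y Uy.
  by exists n => y' E; exists i; apply: Hn.
Qed.

Lemma sub_hausdorff (S : colouring -> Prop) : hausdorff (sub_open S).
Proof.
move=> x y neq_xy.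
have [j neq_j] : exists j, sval x j <> sval y j.
  apply: NNPP => eq_xy; apply: neq_xy; apply: sval_inj; apply: functional_extensionality => j.
  by apply: NNPP => neq_j; apply: eq_xy; exists j.
exists (fun z => agree (code j).+1 (sval z) (sval x)), (fun z => agree (code j).+1 (sval z) (sval y)).
do !split; try exact: ball_open; try exact: agree_refl.
by move=> z Ex Ey; apply: neq_j; rewrite -(Ex j) ?(Ey j).
Qed.

Definition fin_covered (S : colouring -> Prop) (I : Type) (U : I -> {c | S c} -> Prop)
    (P : colouring -> Prop) : Prop :=
  exists l : list I, forall y : {c | S c}, P (sval y) -> exists i, List.In i l /\ U i y.

Lemma fin_covered_union (S : colouring -> Prop) (I : Type) (U : I -> {c | S c} -> Prop)
    (Ps : list (colouring -> Prop)) (P : colouring -> Prop) :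
  (forall c, P c -> exists Q, List.In Q Ps /\ Q c) ->
  (forall Q, List.In Q Ps -> fin_covered U Q) -> fin_covered U P.
Proof.
elim: Ps P => [|Q Ps IH] P P_sub covered.
  by exists nil => y /P_sub [Q []].
have [lQ HQ] := covered Q (or_introl erefl).
have [lPs HPs] := IH (fun c => exists Q', List.In Q' Ps /\ Q' c) (fun c Hc => Hc)
  (fun Q' HQ' => covered Q' (or_intror HQ')).
exists (lQ ++ lPs) => y /P_sub [Q' [[<-|HQ'] Q'y]].
- by have [i [Hi Ui]] := HQ y Q'y; exists i; split => //; apply: in_or_app; left.
- have [i [Hi Ui]] := HPs y (ex_intro _ Q' (conj HQ' Q'y)).
  by exists i; split => //; apply: in_or_app; right.
Qed.

Definition recolour (r : colouring) (j : J) (x : 'I_k) : colouring :=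
  fun i => if excluded_middle_informative (i = j) then x else r i.

Lemma refine_cylinder n r : exists R : list colouring,
  (forall r', List.In r' R -> agree n r' r) /\
  forall c, agree n c r -> exists r', List.In r' R /\ agree n.+1 c r'.
Proof.
case: (classic (exists j, code j = n)) => [[j code_j]|no_code]; last first.
  exists [:: r]; split; first by move=> r' [<-|].
  move=> c E; exists r; split; first by left.
  move=> i; rewrite ltnS leq_eqVlt => /orP [/eqP code_i|]; last exact: E.
  by case: no_code; exists i.
exists [seq recolour r j x | x <- enum 'I_k]; split.
- move=> r' /in_map_iff [x [<- _]] i Hi; rewrite /recolour.
  by case: excluded_middle_informative => // eq_ij; subst; rewrite ltnn in Hi.
- move=> c E; exists (recolour r j (c j)); split.
    by apply: in_map; apply/InP; rewrite mem_enum.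
  move=> i Hi; rewrite /recolour; case: excluded_middle_informative => [eq_ij|neq_ij]; first by subst.
  apply: E; move: Hi; rewrite ltnS leq_eqVlt => /orP [/eqP code_i|] //.
  by case: neq_ij; apply: code_inj; rewrite code_i code_j.
Qed.

Lemma konig (P : colouring -> nat -> Prop) r0 : P r0 0 ->
  (forall r n, P r n -> exists r', agree n r' r /\ P r' n.+1) ->
  exists y, forall n, exists r, agree n r y /\ P r n.
Proof.
move=> P_r0 P_step.
have step n r : exists r', P r n -> agree n r' r /\ P r' n.+1.
  case: (classic (P r n)) => [/P_step [r' Hr']|not_P]; first by exists r'.
  by exists r => /not_P.
pose next n r := proj1_sig (constructive_indefinite_description _ (step n r)).
have nextP n r : P r n -> agree n (next n r) r /\ P (next n r) n.+1.
  exact: proj2_sig (constructive_indefinite_description _ (step n r)).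
pose fix rs n := if n is n'.+1 then next n' (rs n') else r0.
have rsP n : P (rs n) n by elim: n => [|n IH] //=; case: (nextP n _ IH).
have rs_stable m i j : code j < m -> rs (m + i) j = rs m j.
  move=> lt_jm; elim: i => [|i IH]; first by rewrite addn0.
  rewrite addnS /= (proj1 (nextP _ _ (rsP _))) //.
  exact: leq_trans lt_jm (leq_addr _ _).
exists (fun j => rs (code j).+1 j) => n; exists (rs n); split => // j lt_jn.
by rewrite -(subnKC lt_jn) rs_stable.
Qed.

Lemma sub_compact (S : colouring -> Prop) : closed_set S -> compact (sub_open S).
Proof.
move=> S_closed I U U_open U_cover; apply: NNPP => no_subcover.
pose bad r n := ~ fin_covered U (fun c => agree n c r).
have [y0 _] : exists y0 : {c | S c}, True.
  by apply: NNPP => S_empty; apply: no_subcover; exists nil => y; case: S_empty; exists y.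
have bad_step r n : bad r n -> exists r', agree n r' r /\ bad r' n.+1.
  move=> bad_rn; apply: NNPP => all_good; apply: bad_rn.
  have [R [R_sub R_cover]] := refine_cylinder n r.
  apply: (@fin_covered_union _ _ _ [seq (fun c => agree n.+1 c r') | r' <- R]).
  - move=> c /R_cover [r' [Hr' E]]; exists (fun c => agree n.+1 c r'); split => //.
    exact: (in_map (fun r' c => agree n.+1 c r')).
  - move=> Q /in_map_iff [r' [<- Hr']]; apply: NNPP => bad_r'; apply: all_good.
    by exists r'; split => //; apply: R_sub.
have [|y bad_near_y] := @konig bad (sval y0) _ bad_step.
  by move=> [l Hl]; apply: no_subcover; exists l => x; apply: Hl.
have S_y : S y.
  apply: S_closed => n; have [r [E bad_r]] := bad_near_y n.
  apply: NNPP => no_z; apply: bad_r; exists nil => z Ez; case: no_z.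
  by exists (sval z); split; [exact: svalP | exact: agree_trans Ez E].
have [i U_i_y] := U_cover (exist _ y S_y).
have [n U_i_ball] := U_open i _ U_i_y.
have [r [E bad_r]] := bad_near_y n.
apply: bad_r; exists [:: i] => z Ez; exists i; split; first by left.
by apply: U_i_ball; apply: agree_trans Ez E.
Qed.

End CountableProduct.
Arguments sub_open [J] code [k] S V.

Lemma card_le_factor (L : signature) (F : structure L) (Y X : flow F)
    (phi : pt Y -> pt X) (d : nat) :
  factor_map phi -> card_le (pt Y) d -> card_le (pt X) d.
Proof.
move=> [_ [_ phi_onto]] [ys [size_ys all_ys]]; exists (List.map phi ys); split.
  by rewrite List.length_map.
by move=> x; have [y <-] := phi_onto x; apply: in_map.
Qed.

Section ShiftFlow.
Variables (L : signature) (F A : structure L).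
Variable eF : F -> nat.
Hypothesis eF_inj : forall x y, eF x = eF y -> x = y.
Variable sA : list A.
Hypothesis gen_sA : forall x, generated (fun y => List.In y sA) x.
Variable k : nat.

Definition Emb := {a : A -> F | is_embedding a}.

Lemma Emb_ext (a b : Emb) : (forall x, sval a x = sval b x) -> a = b.
Proof.
case: a b => a ha [b hb] /= E.
have {}E : a = b by apply: functional_extensionality.
by subst; f_equal; apply: proof_irrelevance.
Qed.

Definition code (a : Emb) : nat := pickle (List.map (fun z => eF (sval a z)) sA).

Lemma code_inj (a b : Emb) : code a = code b -> a = b.
Proof.
move=> /(pcan_inj (@pickleK _)) /map_ext_in_iff E; apply: Emb_ext.
apply: (emb_eq_on_generators gen_sA (svalP a) (svalP b)) => z Hz.
exact: eF_inj (E z Hz).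
Qed.

Lemma code_bound (lF : list F) :
  exists N, forall a : Emb, (forall x, List.In (sval a x) lF) -> code a < N.
Proof.
have [S HS] := finite_seqs_over (List.map eF lF) (size sA).
exists (maxl pickle S).+1 => a a_lF; rewrite ltnS; apply: maxl_ub; apply: HS; split.
  exact: List.length_map.
by move=> x /in_map_iff [z [<- _]]; apply: in_map.
Qed.

Local Notation col := (colouring Emb k).
Local Notation agree := (agree code).
Local Notation below := (below code_inj).
Local Notation basic := (basic code_inj).

Definition pull (g : aut F) (a : Emb) : Emb :=
  exist _ (aut_inv g \o sval a) (emb_comp (svalP a) (aut_inv_emb g)).

Definition shift (g : aut F) (c : col) : col := fun a => c (pull g a).

Lemma shift_id (g : aut F) : (forall z, g z = z) -> forall c, shift g c = c.
Proof.
move=> g_id c; apply: functional_extensionality => a; congr c; apply: Emb_ext => x /=.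
by rewrite -{1}(g_id (sval a x)) aut_Kinv.
Qed.

Lemma shift_comp (g h gh : aut F) : (forall z, gh z = g (h z)) ->
  forall c, shift gh c = shift g (shift h c).
Proof.
move=> gh_eq c; apply: functional_extensionality => a; congr c; apply: Emb_ext => x /=.
by apply: (@aut_inj _ _ gh); rewrite aut_invK gh_eq !aut_invK.
Qed.

(* Joint continuity of (g, c) |-> g.c: g.c on the points of code < n only
   depends on g on a finite set and on c on the points of code < m. *)
Lemma shift_continuous (g : aut F) n : exists (s : list F) m, forall (g' : aut F) c c',
  (forall z, List.In z s -> g' z = g z) -> agree m c c' ->
  agree n (shift g' c') (shift g c).
Proof.
pose l := below n.
exists (List.flat_map (fun a : Emb => List.map (aut_inv g \o sval a) sA) l).
exists (maxl (fun a => code (pull g a)) l).+1 => g' c c' eq_s E a lt_a.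
have a_l : List.In a l by apply: belowP.
rewrite /shift; have -> : pull g' a = pull g a.
  apply: Emb_ext; apply: (emb_eq_on_generators gen_sA); try exact: svalP.
  move=> z z_sA /=; apply: (@aut_inj _ _ g'); rewrite aut_invK eq_s ?aut_invK //.
  by apply/in_flat_map; exists a; split => //; apply: (in_map (aut_inv g \o sval a)).
by symmetry; apply: E; rewrite ltnS (maxl_ub (fun a => code (pull g a))).
Qed.

Lemma shift_continuous_at (g : aut F) n :
  exists m, forall c c', agree m c c' -> agree n (shift g c) (shift g c').
Proof.
have [s [m Hm]] := shift_continuous g n.
by exists m => c c' E; apply: agree_sym; apply: Hm.
Qed.

Definition invariant (S : col -> Prop) : Prop := forall g c, S c -> S (shift g c).

Definition orbit_closure (chi : col) (c : col) : Prop :=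
  forall n, exists g, agree n (shift g chi) c.

Lemma orbit_closure_self chi : orbit_closure chi chi.
Proof. by move=> n; exists (aut_id F); rewrite shift_id. Qed.

Lemma orbit_closure_closed chi : closed_set code (orbit_closure chi).
Proof.
move=> c near_c n; have [z [orb_z Ez]] := near_c n; have [g Eg] := orb_z n.
by exists g; apply: agree_trans Eg Ez.
Qed.

Lemma orbit_closure_invariant chi : invariant (orbit_closure chi).
Proof.
move=> g c orb_c n; have [m Hm] := shift_continuous_at g n; have [h Eh] := orb_c m.
by exists (aut_comp g h); rewrite (@shift_comp g h) //; apply: Hm.
Qed.

Definition saturated_basic (j : nat) (c : col) : Prop := exists g, basic j (shift g c).

Lemma saturated_basic_open j c :
  saturated_basic j c -> exists n, forall c', agree n c' c -> saturated_basic j c'.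
Proof.
case=> g /basic_open [n Hn]; have [m Hm] := shift_continuous_at g n.
by exists m => c' E; exists g; apply: Hn; apply: Hm.
Qed.

Lemma saturated_basic_shift j g c : saturated_basic j (shift g c) -> saturated_basic j c.
Proof. by case=> h Hh; exists (aut_comp h g); rewrite (@shift_comp h g). Qed.

(* Enumerating the
   countable base, stage j+1 removes from stage j the saturation of the j-th
   basic open set, unless that would empty it; the intersection [core] of all
   stages is nonempty by compactness and minimal, because a point outside a
   closed invariant subset C of [core] has a basic neighbourhood whose
   saturation misses C and was therefore removed. *)
Section MinimalSubflow.
Variable S : col -> Prop.
Hypotheses (S_closed : closed_set code S) (S_invariant : invariant S).

Fixpoint stage (j : nat) : col -> Prop :=
  if j is j'.+1 then fun c =>
    stage j' c /\ (~ saturated_basic j' c \/ ~ exists z, stage j' z /\ ~ saturated_basic j' z)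
  else S.

Definition core (c : col) : Prop := forall j, stage j c.

Lemma stage_closed j : closed_set code (stage j).
Proof.
elim: j => [|j IH]; first exact: S_closed.
move=> c near_c /=.
have stage_c : stage j c by apply: IH => n; have [z [[? _] ?]] := near_c n; exists z.
split => //; case: (classic (exists z, stage j z /\ ~ saturated_basic j z)) => [some_out|]; last by right.
left => /saturated_basic_open [n Hn]; have [z [[_ [not_sat|kept]] Ez]] := near_c n.
- by apply: not_sat; apply: Hn.
- by apply: kept.
Qed.

Lemma stage_invariant j : invariant (stage j).
Proof.
elim: j => [|j IH]; first exact: S_invariant.
move=> g c /= [stage_c [not_sat|kept]]; split; try exact: IH.
- by left => /saturated_basic_shift.
- by right.
Qed.

Lemma stage_nonempty j : (exists c, S c) -> exists c, stage j c.
Proof.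
move=> S_nonempty; elim: j => [//|j [c stage_c]].
case: (classic (exists z, stage j z /\ ~ saturated_basic j z)) => [[z [stage_z not_sat]]|kept].
- by exists z; split => //; left.
- by exists c; split => //; right.
Qed.

Lemma stage_antitone i j : i <= j -> forall c, stage j c -> stage i c.
Proof.
move=> le_ij; rewrite -(subnKC le_ij); elim: (j - i) => [|l IH] c; first by rewrite addn0.
by rewrite addnS => -[/IH].
Qed.

Lemma core_sub c : core c -> S c.
Proof. by move/(_ 0). Qed.

Lemma core_closed : closed_set code core.
Proof. by move=> c near_c j; apply: stage_closed => n; have [z [? ?]] := near_c n; exists z. Qed.

Lemma core_invariant : invariant core.
Proof. by move=> g c core_c j; apply: stage_invariant. Qed.

(* The stages are decreasing, closed and nonempty, so by compactness of S
   their intersection is nonempty. *)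
Lemma core_nonempty : (exists c, S c) -> exists c, core c.
Proof.
move=> S_nonempty; apply: NNPP => core_empty.
have stage_complement_open j : sub_open code S (fun y => ~ stage j (sval y)).
  move=> y not_stage; apply: NNPP => not_open; apply: not_stage; apply: stage_closed => n.
  apply: NNPP => no_z; apply: not_open; exists n => y' E' stage_y'; apply: no_z.
  by exists (sval y'); split.
have stage_complements_cover (y : {c | S c}) : exists j, ~ stage j (sval y).
  apply: NNPP => in_all; apply: core_empty; exists (sval y) => j.
  by apply: NNPP => not_stage; apply: in_all; exists j.
have [l covered] := sub_compact code_inj S_closed stage_complement_open stage_complements_cover.
have [c stage_c] := stage_nonempty (maxl id l) S_nonempty.
have [j [j_l not_stage]] := covered (exist _ c (stage_antitone (leq0n _) stage_c)).
by apply: not_stage; apply: (stage_antitone (maxl_ub id j_l)).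
Qed.

Definition core_act (g : aut F) (y : {c | core c}) : {c | core c} :=
  exist _ (shift g (sval y)) (core_invariant g (svalP y)).

Lemma core_act_id (g : aut F) : (forall z, g z = z) -> forall y, core_act g y = y.
Proof. by move=> g_id y; apply: sval_inj; apply: shift_id. Qed.

Lemma core_act_comp (g h gh : aut F) : (forall z, gh z = g (h z)) ->
  forall y, core_act gh y = core_act g (core_act h y).
Proof. by move=> gh_eq y; apply: sval_inj; apply: shift_comp. Qed.

Lemma core_act_continuous U : sub_open code core U -> forall g y, U (core_act g y) ->
  exists (s : list F) (V : {c | core c} -> Prop), sub_open code core V /\ V y /\
    forall (g' : aut F) y', (forall z, List.In z s -> g' z = g z) -> V y' -> U (core_act g' y').
Proof.
move=> U_open g y U_gy; have [n Hn] := U_open _ U_gy; have [s [m Hm]] := shift_continuous g n.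
exists s, (fun y' => agree m (sval y') (sval y)); split; [exact: ball_open | split; first exact: agree_refl].
by move=> g' y' eq_s E; apply: Hn; apply: Hm => //; apply: agree_sym.
Qed.

Definition core_flow : flow F :=
  @Flow L F {c | core c} (sub_open code core) core_act (sub_topology code core)
    (sub_compact code_inj core_closed) (@sub_hausdorff _ code _ core)
    core_act_id core_act_comp core_act_continuous.

Lemma core_minimal : (exists c, S c) -> minimal_flow core_flow.
Proof.
move=> S_nonempty; split.
  by have [c core_c] := core_nonempty S_nonempty; exists (exist _ c core_c).
move=> C C_open C_invariant [y0 C_y0] y; apply: NNPP => not_C_y.
have [n ball_y] := C_open y not_C_y.
have [j [basic_y basic_near_y]] := basic_ball code_inj n (sval y).
(* the saturation of the basic neighbourhood of y misses the invariant set C *)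
have not_sat_y0 : ~ saturated_basic j (sval y0).
  case=> g /basic_near_y E; apply: (ball_y (core_act g y0) E).
  exact: C_invariant.
have [_ [y_removed|kept]] := svalP y j.+1.
- by apply: y_removed; exists (aut_id F); rewrite shift_id.
- by apply: kept; exists (sval y0); split => //; apply: (svalP y0 j).
Qed.

End MinimalSubflow.

Definition orbit_core_flow (chi : col) : flow F :=
  core_flow (@orbit_closure_closed chi) (@orbit_closure_invariant chi).

Lemma orbit_core_minimal (chi : col) : minimal_flow (orbit_core_flow chi).
Proof. exact: core_minimal (ex_intro _ chi (orbit_closure_self chi)). Qed.

Lemma arrows_of_small_core (d : nat) (chi : col) (a0 : Emb) :
  homogeneous_for F A -> locally_finite F ->
  card_le (pt (orbit_core_flow chi)) d ->
  forall B : structure L, in_age F B ->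
  exists (b : B -> F) (hb : is_embedding b) (cs : list 'I_k), size cs <= d /\
    forall (a : A -> B) (ha : is_embedding a) (hba : is_embedding (b \o a)),
      chi (exist _ (b \o a) hba) \in cs.
Proof.
move=> A_hom F_lf [ys [size_ys all_ys]] B [[sB gen_sB] [b0 hb0]].
have [c0 core_c0] := core_nonempty (@orbit_closure_closed chi) (ex_intro _ chi (orbit_closure_self chi)).
pose cs := List.map (fun y : {c | core (orbit_closure chi) c} => sval y a0) ys.
have few_colours a : List.In (c0 a) cs.
  have [h Eh] := A_hom (sval a) (sval a0) (svalP a) (svalP a0).
  have -> : c0 a = shift h c0 a0 by congr c0; apply: Emb_ext => x /=; rewrite -Eh aut_Kinv.
  pose y : {c | core (orbit_closure chi) c} :=
    exist _ (shift h c0) (core_invariant (@orbit_closure_invariant chi) h core_c0).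
  exact: (in_map (fun y : {c | core (orbit_closure chi) c} => sval y a0) ys y (all_ys y)).
have [lF lF_gen] := F_lf (List.map b0 sB).
have [N code_lt_N] := code_bound lF.
have [g Eg] := core_sub core_c0 N.
exists (aut_inv g \o b0), (emb_comp hb0 (aut_inv_emb g)), cs; split.
  by apply/leP; rewrite -[size _]/(length _) List.length_map.
move=> a ha hba; pose ba : Emb := exist _ (b0 \o a) (emb_comp ha hb0).
have -> : chi (exist _ _ hba) = shift g chi ba by congr chi; apply: Emb_ext.
rewrite Eg; first exact/InP/few_colours.
by apply: code_lt_N => x; apply: lF_gen; apply: emb_generated.
Qed.

End ShiftFlow.

(* The main theorem: apply the previous lemma to the minimal subflow of the
   orbit closure of chi, which is a factor of M(G). *)
Theorem mainTheorem12 (d : nat) (L : signature) (F : structure L)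
  (hcount : countable F) (hlf : locally_finite F)
  (A : structure L) (hA : in_age F A) (hhom : homogeneous_for F A)
  (hM : exists M : flow F, universal_minimal M /\ card_le (pt M) d) :
  forall B : structure L, in_age F B ->
  forall k : nat, 2 <= k -> arrows F A B k d.
Proof.
move=> B hB k _ chi.
case: hA => [[sA gen_sA] [a0 ha0]]; case: hcount => eF eF_inj.
case: hM => M [[_ M_universal] M_small].
have [phi phi_factor] := M_universal _ (orbit_core_minimal eF_inj gen_sA chi).
have core_small := card_le_factor phi_factor M_small.
exact: arrows_of_small_core (exist _ a0 ha0) hhom hlf core_small B hB.
Qed.
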